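(* Let $\mathbf{C}$ be an adhesive category. Consider a commutative diagram consisting of two vertically stacked squares: square (3) with morphisms $z:Z'\to Z$, $w:Z\to Y$, $w':Z'\to Y'$, $y:Y'\to Y$ satisfying $w\circ z=y\circ w'$, and square (4) with morphisms $y:Y'\to Y$, $v:Y\to X$, $v':Y'\to X'$, $x:X'\to X$ satisfying $v\circ y=x\circ v'$. Suppose that $z,w,w',y,v',x$ are monomorphisms, that $v\circ w$ is a monomorphism, that square (3) is a pushout (i.e. $(Y,w,y)$ is a pushout of $Z\xleftarrow{z}Z'\xrightarrow{w'}Y'$), and that the composite square (3)+(4) is an FPC, i.e. $(x,\ v'\circ w')$ is an FPC of $(v\circ w,\ z)$. Then square (4) is an FPC, i.e. $(x,v')$ is an FPC of $(v,y)$, and $v$ is a monomorphism.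
   Context: A category is adhesive if it has pushouts along monomorphisms, has pullbacks, and pushouts along monomorphisms are van Kampen squares. Final pullback complement (FPC): given morphisms $a:A\to B$ and $c:B\to C$, a pair $(d:D\to C,\ b:A\to D)$ is an FPC of $(c,a)$ if $c\circ a=d\circ b$, this square is a pullback (i.e. $(A,a,b)$ is a pullback of $(c,d)$), and for all morphisms $x_0:E\to B$, $y_0:E\to F$, $z_0:F\to C$, $w_0:E\to A$ such that $(E,x_0,y_0)$ is a pullback of $(c,z_0)$ and $a\circ w_0=x_0$, there exists a unique $w^*:F\to D$ with $d\circ w^*=z_0$ and $w^*\circ y_0=b\circ w_0$. *)

(* Hom-sets are types with Leibniz
   equality of morphisms. *)

Set Implicit Arguments.
Unset Strict Implicit.

Record Category := {
  Ob :> Type;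
  Hom : Ob -> Ob -> Type;
  comp : forall {a b c : Ob}, Hom b c -> Hom a b -> Hom a c;
  idm : forall a : Ob, Hom a a;
  comp_assoc : forall (a b c d : Ob) (f : Hom c d) (g : Hom b c) (h : Hom a b),
      comp f (comp g h) = comp (comp f g) h;
  comp_id_l : forall (a b : Ob) (f : Hom a b), comp (idm b) f = f;
  comp_id_r : forall (a b : Ob) (f : Hom a b), comp f (idm a) = f
}.

Arguments Hom {C} : rename.
Arguments comp {C a b c} : rename.
Arguments idm {C} : rename.

Notation "g ∘ f" := (comp g f) (at level 40, left associativity).

Section Defs.
Context {C : Category}.

Definition mono {A B : C} (f : Hom A B) : Prop :=
  forall (Z : C) (g h : Hom Z A), f ∘ g = f ∘ h -> g = h.

Definition is_pullback {B Cc D : C} (f : Hom B D) (g : Hom Cc D)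
    {P : C} (p1 : Hom P B) (p2 : Hom P Cc) : Prop :=
  f ∘ p1 = g ∘ p2 /\
  forall (Q : C) (q1 : Hom Q B) (q2 : Hom Q Cc), f ∘ q1 = g ∘ q2 ->
    exists u : Hom Q P, (p1 ∘ u = q1 /\ p2 ∘ u = q2) /\
      forall u' : Hom Q P, p1 ∘ u' = q1 /\ p2 ∘ u' = q2 -> u' = u.

Definition is_pushout {A B Cc : C} (f : Hom A B) (g : Hom A Cc)
    {P : C} (i1 : Hom B P) (i2 : Hom Cc P) : Prop :=
  i1 ∘ f = i2 ∘ g /\
  forall (Q : C) (q1 : Hom B Q) (q2 : Hom Cc Q), q1 ∘ f = q2 ∘ g ->
    exists u : Hom P Q, (u ∘ i1 = q1 /\ u ∘ i2 = q2) /\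
      forall u' : Hom P Q, u' ∘ i1 = q1 /\ u' ∘ i2 = q2 -> u' = u.

Definition van_Kampen {A B Cc D : C} (m : Hom A B) (f : Hom A Cc)
    (g : Hom B D) (n : Hom Cc D) : Prop :=
  forall (A' B' C' D' : C)
    (m' : Hom A' B') (f' : Hom A' C') (g' : Hom B' D') (n' : Hom C' D')
    (a : Hom A' A) (b : Hom B' B) (c : Hom C' Cc) (d : Hom D' D),
    g' ∘ m' = n' ∘ f' ->
    m ∘ a = b ∘ m' -> f ∘ a = c ∘ f' ->
    g ∘ b = d ∘ g' -> n ∘ c = d ∘ n' ->
    is_pullback m b a m' -> is_pullback f c a f' ->
    (is_pushout m' f' g' n' <->
       (is_pullback g d b g' /\ is_pullback n d c n')).

Definition has_pullbacks : Prop :=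
  forall (B Cc D : C) (f : Hom B D) (g : Hom Cc D),
    exists (P : C) (p1 : Hom P B) (p2 : Hom P Cc), is_pullback f g p1 p2.

Definition has_pushouts_along_monos : Prop :=
  forall (A B Cc : C) (m : Hom A B) (f : Hom A Cc), mono m ->
    exists (P : C) (i1 : Hom B P) (i2 : Hom Cc P), is_pushout m f i1 i2.

Definition pushouts_along_monos_are_vK : Prop :=
  forall (A B Cc D : C) (m : Hom A B) (f : Hom A Cc) (g : Hom B D) (n : Hom Cc D),
    mono m -> is_pushout m f g n -> van_Kampen m f g n.

Definition FPC {A B Cc D : C} (c : Hom B Cc) (a : Hom A B)
    (d : Hom D Cc) (b : Hom A D) : Prop :=
  c ∘ a = d ∘ b /\
  is_pullback c d a b /\
  forall (E F : C) (x0 : Hom E B) (y0 : Hom E F) (z0 : Hom F Cc) (w0 : Hom E A),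
    is_pullback c z0 x0 y0 -> a ∘ w0 = x0 ->
    exists w : Hom F D, (d ∘ w = z0 /\ w ∘ y0 = b ∘ w0) /\
      forall w' : Hom F D, d ∘ w' = z0 /\ w' ∘ y0 = b ∘ w0 -> w' = w.

End Defs.

Definition adhesive (C : Category) : Prop :=
  @has_pushouts_along_monos C /\ @has_pullbacks C /\
  @pushouts_along_monos_are_vK C.

(* Pulling the pushout (3) back along any morphism into Y yields, by the van
   Kampen property, a pushout again, so every such morphism is covered by its
   restrictions to the parts lying over Z and over Y'. On the part over Z,
   the composite square (3)+(4) being a pullback makes morphisms that v sends
   into X' factor through Z', hence through Y'. This reduces the injectivity
   of v and the pullback property of (4) to the two parts, where they follow
   from the monomorphisms v ∘ w, x ∘ v' = v ∘ y and y. For the final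
   property, pasting a pullback of w onto a pullback of v gives a pullback
   of v ∘ w, to which the FPC property of the composite square applies;
   since x is mono, a factorisation through x is all that is needed. *)

From Stdlib Require Import Setoid.

Section Composition.
Context {C : Category}.

Lemma postcomp_eq {A B D : C} {f : Hom B D} {g : Hom A B} {r : Hom A D} :
  f ∘ g = r -> forall (E : C) (s : Hom D E), s ∘ f ∘ g = s ∘ r.
Proof. intros H E s. rewrite <- comp_assoc, H. reflexivity. Qed.

Lemma mono_comp {A B D : C} (f : Hom B D) (g : Hom A B) :
  mono f -> mono g -> mono (f ∘ g).
Proof.
  intros mf mg S h k H. apply mg, mf.
  rewrite !comp_assoc. exact H.
Qed.

End Composition.

Ltac assoc_norm := repeat rewrite comp_assoc.

(* Rewrites with an equation between composites inside a left-associated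
   composite, also when its left-hand side is not a prefix of the latter. *)
Ltac rewrite_comp H :=
  let H0 := fresh in
  pose proof H as H0; repeat rewrite comp_assoc in H0; assoc_norm;
  first [ rewrite H0
        | let H1 := fresh in
          pose proof (postcomp_eq H0) as H1;
          repeat setoid_rewrite comp_assoc in H1; rewrite H1; clear H1 ];
  clear H0; assoc_norm.

Ltac rewrite_comp_rev H := rewrite_comp (eq_sym H).

Section PullbacksPushouts.
Context {C : Category}.

Definition jointly_epic {B Cc T : C} (g : Hom B T) (n : Hom Cc T) : Prop :=
  forall (Q : C) (u1 u2 : Hom T Q), u1 ∘ g = u2 ∘ g -> u1 ∘ n = u2 ∘ n -> u1 = u2.

Lemma pullback_factor {B Cc D P Q : C} {f : Hom B D} {g : Hom Cc D}
    {p1 : Hom P B} {p2 : Hom P Cc} (q1 : Hom Q B) (q2 : Hom Q Cc) :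
  is_pullback f g p1 p2 -> f ∘ q1 = g ∘ q2 ->
  exists u : Hom Q P, p1 ∘ u = q1 /\ p2 ∘ u = q2.
Proof.
  intros [_ U] Hq. destruct (U Q q1 q2 Hq) as [u [Hu _]]. exists u. exact Hu.
Qed.

Lemma pullback_jointly_monic {B Cc D P Q : C} {f : Hom B D} {g : Hom Cc D}
    {p1 : Hom P B} {p2 : Hom P Cc} (u1 u2 : Hom Q P) :
  is_pullback f g p1 p2 -> p1 ∘ u1 = p1 ∘ u2 -> p2 ∘ u1 = p2 ∘ u2 -> u1 = u2.
Proof.
  intros [Hc U] E1 E2.
  destruct (U Q (p1 ∘ u1) (p2 ∘ u1)) as [u [_ Uu]].
  { rewrite !comp_assoc, Hc. reflexivity. }
  rewrite (Uu u1) by auto. symmetry. apply Uu. split; symmetry; assumption.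
Qed.

Lemma pullback_intro {B Cc D P : C} (f : Hom B D) (g : Hom Cc D)
    (p1 : Hom P B) (p2 : Hom P Cc) :
  f ∘ p1 = g ∘ p2 ->
  (forall (Q : C) (q1 : Hom Q B) (q2 : Hom Q Cc), f ∘ q1 = g ∘ q2 ->
     exists u : Hom Q P, p1 ∘ u = q1 /\ p2 ∘ u = q2) ->
  (forall (Q : C) (u1 u2 : Hom Q P),
     p1 ∘ u1 = p1 ∘ u2 -> p2 ∘ u1 = p2 ∘ u2 -> u1 = u2) ->
  is_pullback f g p1 p2.
Proof.
  intros Hc Ex Un. split; [exact Hc|].
  intros Q q1 q2 Hq. destruct (Ex Q q1 q2 Hq) as [u [U1 U2]].
  exists u. split; [split; assumption|].
  intros u' [V1 V2]. apply Un; congruence.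
Qed.

Lemma pushout_jointly_epic {A B Cc P : C} {f : Hom A B} {g : Hom A Cc}
    {i1 : Hom B P} {i2 : Hom Cc P} :
  is_pushout f g i1 i2 -> jointly_epic i1 i2.
Proof.
  intros [Hc U] Q u1 u2 E1 E2.
  destruct (U Q (u1 ∘ i1) (u1 ∘ i2)) as [u [_ Uu]].
  { rewrite <- !comp_assoc, Hc. reflexivity. }
  rewrite (Uu u1) by auto. symmetry. apply Uu. split; symmetry; assumption.
Qed.

Lemma pullback_paste {B B' Cc D P P' : C} {f : Hom B D} {g : Hom Cc D}
    {p1 : Hom P B} {p2 : Hom P Cc} {h : Hom B' B}
    {q1 : Hom P' B'} {q2 : Hom P' P} :
  is_pullback f g p1 p2 -> is_pullback h p1 q1 q2 ->
  is_pullback (f ∘ h) g q1 (p2 ∘ q2).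
Proof.
  intros PB PB'. pose proof PB as [Hc _]. pose proof PB' as [Hc' _].
  apply pullback_intro.
  - rewrite_comp Hc'. rewrite_comp Hc. reflexivity.
  - intros Q r1 r2 Hr.
    destruct (pullback_factor (h ∘ r1) r2 PB) as [s [S1 S2]].
    { assoc_norm. exact Hr. }
    destruct (pullback_factor r1 s PB') as [u [U1 U2]]; [symmetry; exact S1|].
    exists u. split; [exact U1|]. rewrite_comp U2. exact S2.
  - intros Q u1 u2 E1 E2. apply (pullback_jointly_monic u1 u2 PB'); [exact E1|].
    apply (pullback_jointly_monic _ _ PB); [|assoc_norm; exact E2].
    rewrite_comp_rev Hc'. rewrite_comp E1. reflexivity.
Qed.

Lemma pullback_cancel {B B' Cc D P P' : C} {f : Hom B D} {g : Hom Cc D}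
    {p1 : Hom P B} {p2 : Hom P Cc} {h : Hom B' B}
    {q1 : Hom P' B'} {q2 : Hom P' P} :
  is_pullback f g p1 p2 -> is_pullback (f ∘ h) g q1 (p2 ∘ q2) ->
  p1 ∘ q2 = h ∘ q1 -> is_pullback h p1 q1 q2.
Proof.
  intros PB PB' Hc'. pose proof PB as [Hc _].
  apply pullback_intro; [symmetry; exact Hc'| |].
  - intros Q r1 r2 Hr.
    destruct (pullback_factor r1 (p2 ∘ r2) PB') as [u [U1 U2]].
    { rewrite_comp Hr. rewrite_comp Hc. reflexivity. }
    exists u. split; [exact U1|].
    apply (pullback_jointly_monic _ _ PB); [|assoc_norm; exact U2].
    rewrite_comp Hc'. rewrite_comp U1. exact Hr.
  - intros Q u1 u2 E1 E2. apply (pullback_jointly_monic u1 u2 PB'); [exact E1|].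
    rewrite <- !comp_assoc, E2. reflexivity.
Qed.

Lemma FPC_of_mono {A B Cc D : C} (c : Hom B Cc) (a : Hom A B)
    (d : Hom D Cc) (b : Hom A D) :
  mono d -> is_pullback c d a b ->
  (forall (E F : C) (x0 : Hom E B) (y0 : Hom E F) (z0 : Hom F Cc) (w0 : Hom E A),
     is_pullback c z0 x0 y0 -> a ∘ w0 = x0 -> exists w : Hom F D, d ∘ w = z0) ->
  FPC c a d b.
Proof.
  intros md PB Ex. pose proof PB as [Hc _].
  split; [exact Hc|]. split; [exact PB|].
  intros E F x0 y0 z0 w0 PBE Hw0. pose proof PBE as [HE _].
  destruct (Ex E F x0 y0 z0 w0 PBE Hw0) as [w Hw].
  exists w. split; [split; [exact Hw|]|].
  - apply md. rewrite_comp Hw. rewrite_comp_rev HE. rewrite_comp_rev Hw0.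
    rewrite_comp Hc. reflexivity.
  - intros w' [Hw' _]. apply md. congruence.
Qed.

End PullbacksPushouts.

Section PushoutAlongMono.
Context {C : Category} (HC : adhesive C) {Z' Z Y Y' : C}
  {z : Hom Z' Z} {w' : Hom Z' Y'} {w : Hom Z Y} {y : Hom Y' Y}
  (mz : mono z) (po : is_pushout z w' w y).

Lemma pushout_stable_under_pullback (T : C) (d : Hom T Y) :
  exists (B' C' A' : C) (b : Hom B' Z) (c : Hom C' Y') (g' : Hom B' T)
    (n' : Hom C' T) (m' : Hom A' B') (f' : Hom A' C'),
    w ∘ b = d ∘ g' /\ y ∘ c = d ∘ n' /\ is_pushout m' f' g' n'.
Proof.
  destruct HC as [_ [Hpb HvK]]. pose proof po as [Hpo _].
  destruct (Hpb _ _ _ w d) as [B' [b [g' PB]]].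
  destruct (Hpb _ _ _ y d) as [C' [c [n' PC]]].
  destruct (Hpb _ _ _ z b) as [A' [a [m' PA]]].
  pose proof PB as [HB _]. pose proof PC as [HCc _]. pose proof PA as [HA _].
  destruct (pullback_factor (w' ∘ a) (g' ∘ m') PC) as [f' [F1 F2]].
  { rewrite_comp_rev Hpo. rewrite_comp HA. rewrite_comp HB. reflexivity. }
  assert (PF : is_pullback w' c a f').
  { apply (pullback_cancel PC); [|exact F1].
    rewrite <- Hpo, F2. exact (pullback_paste PB PA). }
  exists B', C', A', b, c, g', n', m', f'.
  split; [exact HB|]. split; [exact HCc|].
  apply (HvK Z' Z Y' Y z w' w y mz po A' B' C' T m' f' g' n' a b c d);
    try assumption; try (symmetry; assumption).
  split; assumption.
Qed.

Lemma pushout_cover_eq (S : C) (k l : Hom S Y) :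
  (forall (T : C) (t : Hom T S) (b : Hom T Z), k ∘ t = w ∘ b -> l ∘ t = w ∘ b) ->
  (forall (T : C) (t : Hom T S) (c : Hom T Y'), k ∘ t = y ∘ c -> l ∘ t = y ∘ c) ->
  k = l.
Proof.
  intros Hw Hy.
  destruct (pushout_stable_under_pullback S k)
    as (B' & C' & A' & b & c & g' & n' & m' & f' & HB & HCc & PO).
  apply (pushout_jointly_epic PO).
  - rewrite (Hw _ g' b); auto.
  - rewrite (Hy _ n' c); auto.
Qed.

Lemma factor_through_pushout_inj (my : mono y) (Q : C) (q : Hom Q Y) :
  (forall (T : C) (t : Hom T Q) (b : Hom T Z), q ∘ t = w ∘ b ->
     exists e : Hom T Z', z ∘ e = b) ->
  exists u : Hom Q Y', y ∘ u = q.
Proof.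
  intros Hz. pose proof po as [Hpo _].
  destruct (pushout_stable_under_pullback Q q)
    as (B' & C' & A' & b & c & g' & n' & m' & f' & HB & HCc & PO).
  destruct (Hz B' g' b (eq_sym HB)) as [e He].
  pose proof PO as [HPO UPO].
  destruct (UPO Y' (w' ∘ e) c) as [u [[U1 U2] _]].
  { apply my. rewrite_comp_rev Hpo. rewrite_comp He. rewrite_comp HB.
    rewrite_comp HPO. rewrite_comp_rev HCc. reflexivity. }
  exists u. apply (pushout_jointly_epic PO).
  - rewrite_comp U1. rewrite_comp_rev Hpo. rewrite_comp He. exact HB.
  - rewrite_comp U2. exact HCc.
Qed.

Lemma mono_out_of_pushout {X : C} (v : Hom Y X) :
  mono (v ∘ w) -> mono (v ∘ y) ->
  (forall (S : C) (b : Hom S Z) (c : Hom S Y'), v ∘ w ∘ b = v ∘ y ∘ c ->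
     w ∘ b = y ∘ c) ->
  mono v.
Proof.
  intros mvw mvy Hwy.
  assert (on_w : forall S (k : Hom S Y) (b : Hom S Z),
             v ∘ k = v ∘ w ∘ b -> k = w ∘ b).
  { intros S k b Hk. apply pushout_cover_eq; intros T t b' Ht.
    - assert (E : b ∘ t = b') by (apply mvw; rewrite_comp_rev Hk; rewrite_comp Ht;
                                  reflexivity).
      rewrite <- E. assoc_norm. reflexivity.
    - rewrite <- comp_assoc. apply Hwy.
      rewrite_comp_rev Hk. rewrite_comp Ht. reflexivity. }
  assert (on_y : forall S (k : Hom S Y) (c : Hom S Y'),
             v ∘ k = v ∘ y ∘ c -> k = y ∘ c).
  { intros S k c Hk. apply pushout_cover_eq; intros T t b Ht.
    - rewrite <- comp_assoc. symmetry. apply Hwy.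
      rewrite_comp_rev Hk. rewrite_comp Ht. reflexivity.
    - assert (E : c ∘ t = b) by (apply mvy; rewrite_comp_rev Hk; rewrite_comp Ht;
                                 reflexivity).
      rewrite <- E. assoc_norm. reflexivity. }
  intros S g h Hgh. apply pushout_cover_eq; intros T t b Ht.
  - apply on_w. rewrite_comp_rev Hgh. rewrite_comp Ht. reflexivity.
  - apply on_y. rewrite_comp_rev Hgh. rewrite_comp Ht. reflexivity.
Qed.

End PushoutAlongMono.

Section Square4.
Context {C : Category} (HC : adhesive C) {Z' Z Y Y' X X' : C}
  {z : Hom Z' Z} {w : Hom Z Y} {w' : Hom Z' Y'} {y : Hom Y' Y}
  {v : Hom Y X} {v' : Hom Y' X'} {x : Hom X' X}
  (sq3 : w ∘ z = y ∘ w') (sq4 : v ∘ y = x ∘ v')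
  (mz : mono z) (my : mono y) (mv' : mono v') (mx : mono x)
  (po3 : is_pushout z w' w y) (pb34 : is_pullback (v ∘ w) x z (v' ∘ w')).

Lemma v_reflects_overlap (S : C) (b : Hom S Z) (c : Hom S Y') :
  v ∘ w ∘ b = v ∘ y ∘ c -> w ∘ b = y ∘ c.
Proof.
  intros H.
  destruct (pullback_factor b (v' ∘ c) pb34) as [u [U1 U2]].
  { rewrite_comp H. rewrite_comp sq4. reflexivity. }
  assert (E : w' ∘ u = c) by (apply mv'; assoc_norm; exact U2).
  rewrite_comp_rev U1. rewrite_comp sq3. rewrite_comp E. reflexivity.
Qed.

Lemma square4_mono (mvw : mono (v ∘ w)) : mono v.
Proof.
  apply (mono_out_of_pushout HC mz po3); [exact mvw | | exact v_reflects_overlap].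
  rewrite sq4. apply mono_comp; assumption.
Qed.

Lemma square4_pullback : is_pullback v x y v'.
Proof.
  apply pullback_intro; [exact sq4 | |].
  - intros Q q1 q2 Hq.
    destruct (factor_through_pushout_inj HC mz po3 my _ q1) as [u Hu].
    { intros T t b Ht.
      destruct (pullback_factor b (q2 ∘ t) pb34) as [e [He _]].
      { rewrite_comp_rev Ht. rewrite_comp Hq. reflexivity. }
      exists e. exact He. }
    exists u. split; [exact Hu|].
    apply mx. rewrite_comp_rev sq4. rewrite_comp Hu. exact Hq.
  - intros Q u1 u2 E1 _. apply my. exact E1.
Qed.

Lemma square4_factor_through_x (fpc34 : FPC (v ∘ w) z x (v' ∘ w'))
    (E F : C) (x0 : Hom E Y) (y0 : Hom E F) (z0 : Hom F X) (w0 : Hom E Y') :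
  is_pullback v z0 x0 y0 -> y ∘ w0 = x0 -> exists ws : Hom F X', x ∘ ws = z0.
Proof.
  intros PBE Hw0. destruct fpc34 as [_ [_ Ufpc]].
  destruct HC as [_ [Hpb _]].
  destruct (Hpb _ _ _ w x0) as [E' [p [q PBp]]]. pose proof PBp as [Hp _].
  destruct (pullback_factor p (v' ∘ w0 ∘ q) pb34) as [e [He _]].
  { rewrite_comp Hp. rewrite_comp_rev Hw0. rewrite_comp sq4. reflexivity. }
  destruct (Ufpc E' F p (y0 ∘ q) z0 e (pullback_paste PBE PBp) He)
    as [ws [[Hws _] _]].
  exists ws. exact Hws.
Qed.

End Square4.

Theorem mainTheorem6 (C : Category) (HC : adhesive C)
    (Z' Z Y Y' X X' : C)
    (z : Hom Z' Z) (w : Hom Z Y) (w' : Hom Z' Y') (y : Hom Y' Y)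
    (v : Hom Y X) (v' : Hom Y' X') (x : Hom X' X)
    (sq3 : w ∘ z = y ∘ w')
    (sq4 : v ∘ y = x ∘ v')
    (mz : mono z) (mw : mono w) (mw' : mono w') (my : mono y)
    (mv' : mono v') (mx : mono x) (mvw : mono (v ∘ w))
    (po3 : is_pushout z w' w y)
    (fpc34 : FPC (v ∘ w) z x (v' ∘ w')) :
  FPC v y x v' /\ mono v.
Proof.
  pose proof fpc34 as [_ [pb34 _]].
  split.
  - apply FPC_of_mono; [exact mx | |].
    + exact (square4_pullback HC sq4 mz my mx po3 pb34).
    + exact (square4_factor_through_x HC sq4 pb34 fpc34).
  - exact (square4_mono HC sq3 sq4 mz mv' mx po3 pb34 mvw).
Qed.
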